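(* Let $p>0$, $M\in\mathbb N_0$, $d_{\max}\in\mathbb N_0$, $c_p=\min\{2^{1-p},1\}$, and $$d(p,M,d_{\max})=1+\bigl\lfloor c_p^{-2}+(c_p^{-1}+c_p^{-2})\,d_{\max}M^p\bigr\rfloor.$$ For every $d\ge d(p,M,d_{\max})$ and every $\omega^0\in\mathbb Z^V$ whose set of broken edges $D=\{\{v,w\}:\omega^0_v\neq\omega^0_w\}$ satisfies $d_D\le d_{\max}$ and whose increments satisfy $\max_{v\sim w}|\omega^0_v-\omega^0_w|\le M$, the configuration $\omega^0$ is stable for the $p$-SOS model on $\mathcal T^d$ with stability constant $c=dc_p^2-1-(c_p+1)d_{\max}M^p>0$.
   Context: $\mathcal T^d=(V,E)$ is the Cayley tree of order $d$ (every vertex has $d+1$ neighbours). For $D\subset E$, $d_D(v)$ is the number of edges of $D$ incident to $v$ and $d_D=\max_v d_D(v)$. For configurations $\omega,\omega^0\in\mathbb Z^V$ differing at finitely many sites, $H(\omega)-H(\omega^0)=\sum_{\{v,w\}\in E}(|\omega_v-\omega_w|^p-|\omega^0_v-\omega^0_w|^p)$ (a finite sum). A configuration $\omega^0\in\mathbb Z^V$ is called stable with stability constant $c>0$ if for all $\omega\in\mathbb Z^V$ differing from $\omega^0$ at finitely many sites, $H(\omega)-H(\omega^0)\ge c\sum_{v}|\omega_v-\omega^0_v|^p$. *)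

From HB Require Import structures.
From mathcomp Require Import all_boot all_order all_algebra.
From mathcomp Require Import all_classical all_reals all_analysis.
Set Implicit Arguments. Unset Strict Implicit. Unset Printing Implicit Defensive.
Import Order.TTheory GRing.Theory Num.Theory.
Local Open Scope ring_scope.
Local Open Scope classical_set_scope.

(* The Cayley tree T^d of order d: vertices are the reduced words over the
   alphabet 'I_(d+1) = {0,..,d} (no two consecutive letters equal), i.e. the
   Cayley graph of the free product of d+1 copies of Z/2.  The root is the
   empty word; the neighbours of a word u are its parent (u with the last
   letter deleted, if u is nonempty) and its children rcons u a with
   a different from the last letter of u. *)
Definition vtx (d : nat) := seq 'I_d.+1.

Fixpoint reduced (d : nat) (u : vtx d) : bool :=
  match u with
  | [::] => true
  | a :: s => (if s is b :: _ then a != b else true) && reduced s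
  end.

Definition parent (d : nat) (u : vtx d) : vtx d := take (size u).-1 u.

(* Edges of T^d are in bijection with nonempty reduced words u (the edge is
   {parent u, u}). *)
Definition is_edge_child (d : nat) (u : vtx d) : Prop := reduced u /\ u != [::].

Definition neighbours (d : nat) (u : vtx d) : seq (vtx d) :=
  (if u is [::] then [::] else [:: parent u]) ++
  [seq rcons u a | a <- enum 'I_d.+1 & reduced (rcons u a)].

Definition broken_deg (d : nat) (w0 : vtx d -> int) (v : vtx d) : nat :=
  count (fun w => w0 v != w0 w) (neighbours v).

Definition ipow (R : realType) (x : int) (p : R) : R := powR `|(x%:~R : R)| p.

(* H(w) - H(w0), a finite sum when w and w0 differ at finitely many sites *)
Definition Hdiff (R : realType) (p : R) (d : nat) (w w0 : vtx d -> int) : R :=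
  \sum_(u \in [set u : vtx d | is_edge_child u])
     (ipow (w u - w (parent u)) p - ipow (w0 u - w0 (parent u)) p).

Definition finite_diff (d : nat) (w w0 : vtx d -> int) : Prop :=
  finite_set [set v : vtx d | reduced v /\ w v != w0 v].

Definition stable (R : realType) (p : R) (d : nat) (w0 : vtx d -> int) (c : R) : Prop :=
  0 < c /\
  forall w : vtx d -> int, finite_diff w w0 ->
    c * (\sum_(v \in [set v : vtx d | reduced v]) ipow (w v - w0 v) p)
      <= Hdiff p w w0.

Definition c_p (R : realType) (p : R) : R := Num.min (powR 2 (1 - p)) 1.

Definition d_thr (R : realType) (p : R) (M dmax : nat) : int :=
  1 + Num.floor ((c_p p)^-2 + ((c_p p)^-1 + (c_p p)^-2) * dmax%:R * powR M%:R p).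

Definition stab_const (R : realType) (p : R) (M dmax d : nat) : R :=
  d%:R * (c_p p)^+2 - 1 - (c_p p + 1) * dmax%:R * powR M%:R p.

(* Write w = w0 + x.  For exponents p > 0 the p-th powers satisfy the
   quasi-triangle inequality  c_p |y|^p <= |x - y|^p + |x|^p  (convexity of
   t^p for p >= 1, subadditivity for p <= 1).  Orient every edge from the
   parent v to the child u.  On an unbroken edge this bounds the energy change
   below by c_p |x_v|^p - |x_u|^p; on a broken edge the increment a satisfies
   1 <= |a|^p <= M^p, so the change is 0 or at least -M^p, and in both cases it
   exceeds the same quantity minus (c_p + 1) M^p (|x_u|^p + |x_v|^p).  Summing
   over edges, every vertex is the parent of at least d edges, the child of at
   most one, and lies on at most d_max broken edges, whence
   H(w) - H(w0) >= (c_p d - 1 - (c_p + 1) d_max M^p) sum_v |x_v|^p, and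
   c_p d >= c_p^2 d.  The threshold d(p, M, d_max) makes the constant positive. *)

From HB Require Import structures.
From mathcomp Require Import all_boot all_order all_algebra.
From mathcomp Require Import all_classical all_reals all_analysis.
From mathcomp Require Import finmap.
From mathcomp.algebra_tactics Require Import ring lra.
Import Order.TTheory GRing.Theory Num.Theory.
Local Open Scope ring_scope.
Local Open Scope classical_set_scope.

Section reduced_words.
Variable d : nat.
Implicit Types (u v : vtx d) (a : 'I_d.+1).

Lemma reduced_rcons v a :
  reduced (rcons v a) = reduced v && ((v == [::]) || (last a v != a)).
Proof.
elim: v => [|b s IH] //=.
by case: s IH => [|c s] /= IH; rewrite ?andbT // IH !andbA.
Qed.

Lemma reduced_rconsW v a : reduced (rcons v a) -> reduced v.
Proof. by rewrite reduced_rcons => /andP[]. Qed.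

Lemma parent_rcons v a : parent (rcons v a) = v.
Proof. by rewrite /parent size_rcons -cats1 take_size_cat. Qed.

Lemma reduced_parent u : reduced u -> reduced (parent u).
Proof. by case/lastP: u => [//|v a]; rewrite parent_rcons; apply: reduced_rconsW. Qed.

Lemma rcons_in_neighbours v a :
  reduced (rcons v a) -> rcons v a \in neighbours v.
Proof. by move=> va; rewrite mem_cat map_f ?orbT // mem_filter va mem_enum. Qed.

Lemma card_children_ge v : reduced v -> (d <= #|[pred a | reduced (rcons v a)]|)%N.
Proof.
case: v => [_|b s rv]; first by rewrite (eq_card (fun a => erefl true)) card_ord.
have children : [pred a | reduced (rcons (b :: s) a)] =i predC1 (last b s).
  by move=> a; rewrite !inE reduced_rcons rv /= eq_sym.
by rewrite (eq_card children) cardC1 card_ord.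
Qed.

Lemma broken_degE (w0 : vtx d -> int) v :
  broken_deg w0 v = ((v != [::]) && (w0 v != w0 (parent v))
    + \sum_(a | reduced (rcons v a)) (w0 (rcons v a) != w0 v))%N.
Proof.
rewrite /broken_deg /neighbours count_cat; congr addn.
  by case: v => //= *; rewrite addn0.
rewrite count_map -sumn_count sumnE big_map big_filter big_enum_cond /=.
by apply: eq_bigr => a _; rewrite eq_sym.
Qed.

End reduced_words.

Lemma fsbig_fset_superset {R : nmodType} {T : choiceType} {P X : set T} {f : T -> R} :
  finite_set X -> (forall x, P x -> f x != 0 -> X x) ->
  \sum_(x \in P) f x = \sum_(x <- fset_set X) (if x \in P then f x else 0).
Proof.
move=> finX suppX; rewrite fsbig_mkcond -(fsbig_widen X setT) //.
  by rewrite (fsbig_finite _ _ finX); apply: eq_bigr => x _; rewrite /patch.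
move=> x [_ Xx] /=; rewrite /patch; case: ifPn => // /set_mem Px.
by have [//|fx] := eqVneq (f x) 0; case: Xx; apply: suppX.
Qed.

Lemma fsbig_edge_children {R : nmodType} {d} {X : set (vtx d)} {K : vtx d -> R} :
  finite_set X ->
  (forall v a, reduced (rcons v a) -> K (rcons v a) != 0 -> X v) ->
  \sum_(u \in [set u | is_edge_child u]) K u =
  \sum_(v <- fset_set X) \sum_(a | reduced (rcons v a)) K (rcons v a).
Proof.
move=> finX suppX.
rewrite (reindex_fsbig (fun va : vtx d * 'I_d.+1 => rcons va.1 va.2)
   [set va | reduced (rcons va.1 va.2)]); last first.
  split.
  - by move=> [v a] /= va; split => //; case: v {va}.
  - by move=> [v a] [v' a'] _ _ /= /rcons_inj.
  - move=> [|x s] [] // rs _.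
    by exists (belast x s, last x s); rewrite /= -lastI.
pose G v a := if reduced (rcons v a) then K (rcons v a) else 0.
rewrite fsbig_mkcond -(fsbig_widen (X `*` setT) setT) //; last first.
  move=> [v a] [_ /= Xv]; rewrite /patch; case: ifPn => // /set_mem /= va.
  have [//|Kva] := eqVneq (K (rcons v a)) 0.
  by case: Xv; split; [apply: suppX va Kva|].
rewrite (eq_fsbigr (fun va => G va.1 va.2)); last first.
  move=> [v a] _; rewrite /patch /G /=; case: ifPn => [/set_mem -> // | va].
  by case: ifPn => // va'; case/negP: va; apply/mem_set.
rewrite -(pair_fsbig _ G) //; last exact: finite_finset.
rewrite (fsbig_finite _ _ finX); apply: eq_bigr => v _.
rewrite (fsbig_fwiden (enum 'I_d.+1)) //.
- by rewrite big_enum [RHS]big_mkcond.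
- by move=> a _ /=; rewrite mem_enum.
- exact: enum_uniq.
- by move=> a [_ /(_ I)].
Qed.

Section p_powers.
Variable R : realType.
Implicit Types p s t : R.

Lemma powR_midpoint_le p s t : 1 <= p -> 0 <= s -> 0 <= t ->
  powR (2^-1 * (s + t)) p <= 2^-1 * (powR s p + powR t p).
Proof.
move=> p1 s0 t0; rewrite !mulrDr.
rewrite {2 4}(_ : 2^-1 = 1 - 2^-1); last by rewrite {2}(splitr 1) div1r addrK.
by apply: (convex_powR p1 (Itv01 _ _));
  rewrite ?in_setE/= ?in_itv/= ?invr_ge0 ?invf_le1 ?ler1n ?s0 ?t0.
Qed.

Lemma powR_subadditive p s t : 0 < p -> p <= 1 -> 0 <= s -> 0 <= t ->
  powR (s + t) p <= powR s p + powR t p.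
Proof.
move=> p0 p1 s0 t0.
have [->|t_neq0] := eqVneq t 0; first by rewrite addr0 powR0 ?gt_eqF // addr0.
have st_gt0 : 0 < s + t by rewrite ltr_wpDl // lt0r t_neq0.
have st_neq0 := lt0r_neq0 st_gt0.
(* [r <= r^p] for [r] in [0, 1] when [p <= 1] *)
have share x : 0 <= x -> x <= s + t -> x / (s + t) * powR (s + t) p <= powR x p.
  move=> x0 x_le; rewrite -{2}(divfK st_neq0 x) powRM ?divr_ge0 ?(ltW st_gt0) //.
  rewrite ler_wpM2r ?powR_ge0 //.
  have [->|x_neq0] := eqVneq x 0; first by rewrite mul0r powR0 ?gt_eqF.
  apply: (ger1_powR _ p1); rewrite ler_pdivrMr // mul1r x_le andbT.
  by rewrite divr_gt0 // lt0r x_neq0.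
rewrite -[X in X <= _]mul1r -(divff st_neq0) mulrDl mulrDl.
by rewrite lerD ?share ?lerDl ?lerDr.
Qed.

Lemma cp_gt0 p : 0 < c_p p.
Proof. by rewrite /c_p lt_min ltr01 andbT powR_gt0. Qed.

Lemma cp_le1 p : c_p p <= 1.
Proof. by rewrite /c_p ge_min lexx orbT. Qed.

Lemma cp_powRD_le p s t : 0 < p -> 0 <= s -> 0 <= t ->
  c_p p * powR (s + t) p <= powR s p + powR t p.
Proof.
move=> p0 s0 t0; have st0 : 0 <= s + t by rewrite addr_ge0.
have [p1|p_lt1] := lerP 1 p; last first.
  apply: le_trans (_ : 1 * powR (s + t) p <= _).
    by rewrite ler_wpM2r ?powR_ge0 ?cp_le1.
  by rewrite mul1r powR_subadditive ?(ltW p_lt1).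
have two_pow_gt0 : 0 < powR 2 p by rewrite powR_gt0.
have half_pow : powR (2^-1) p = (powR 2 p)^-1.
  apply: (mulfI (lt0r_neq0 two_pow_gt0)).
  by rewrite -powRM ?invr_ge0 // divff ?pnatr_eq0 // powR1 divff ?lt0r_neq0.
apply: le_trans (_ : powR 2 (1 - p) * powR (s + t) p <= _).
  by rewrite ler_wpM2r ?powR_ge0 // /c_p ge_min lexx.
rewrite powRD ?pnatr_eq0 ?implybT // powRr1 // powRN -half_pow -mulrA -powRM //.
apply: le_trans (_ : 2 * (2^-1 * (powR s p + powR t p)) <= _).
  by rewrite ler_wpM2l ?powR_midpoint_le.
by rewrite mulrA divff ?pnatr_eq0 // mul1r.
Qed.

Lemma ipow_ge0 (z : int) p : 0 <= ipow z p.
Proof. exact: powR_ge0. Qed.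

Lemma ipow0 p : 0 < p -> ipow 0 p = 0.
Proof. by move=> p0; rewrite /ipow normr0 powR0 // gt_eqF. Qed.

Lemma ipow_ge1 (z : int) p : 0 < p -> z != 0 -> 1 <= ipow z p.
Proof.
move=> p0 z_neq0; apply: le_trans (_ : powR 1 p <= _); first by rewrite powR1.
apply: ge0_ler_powR; rewrite ?nnegrE ?(ltW p0) //.
by apply: norm_intr_ge1; rewrite ?intr_int ?intr_eq0.
Qed.

Lemma ipow_le_powR (z : int) (M : nat) p : 0 < p -> `|z| <= M%:Z ->
  ipow z p <= powR M%:R p.
Proof.
move=> p0 zM; rewrite /ipow; apply: ge0_ler_powR; rewrite ?nnegrE ?(ltW p0) //.
by rewrite -intr_norm -[M%:R]/((M%:Z)%:~R) ler_int.
Qed.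

Lemma ipow_quasi_triangle p (x y : int) : 0 < p ->
  c_p p * ipow y p <= ipow (x - y) p + ipow x p.
Proof.
move=> p0; rewrite /ipow.
have y_le : `|(y%:~R : R)| <= `|((x - y)%:~R : R)| + `|(x%:~R : R)|.
  have -> : (y%:~R : R) = x%:~R - (x - y)%:~R.
    by rewrite intrB opprB addrC subrK.
  by rewrite [X in _ <= X]addrC ler_normB.
apply: le_trans _ (cp_powRD_le _ _ _ p0 (normr_ge0 _) (normr_ge0 _)).
by rewrite ler_wpM2l ?(ltW (cp_gt0 p)) // ge0_ler_powR ?nnegrE ?(ltW p0).
Qed.

(* If [a != 0] then [1 <= |a|^p <= M^p]: for [x = y] the change is [0], and
   otherwise it is at least [- M^p] while [|x|^p + |y|^p >= 1]. *)
Lemma ipow_edge_change p (M : nat) (a x y : int) :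
  0 < p -> `|a| <= M%:Z ->
  c_p p * ipow y p - ipow x p
    - (a != 0)%:R * ((c_p p + 1) * powR M%:R p) * (ipow x p + ipow y p)
  <= ipow (a + x - y) p - ipow a p.
Proof.
move=> p0 aM; have c_gt0 := cp_gt0 p; have c_le1 := cp_le1 p.
have X0 := ipow_ge0 x p; have Y0 := ipow_ge0 y p.
have [-> | a_neq0] := eqVneq a 0.
  by rewrite !mul0r subr0 add0r ipow0 // subr0 lerBlDr ipow_quasi_triangle.
have a_le := ipow_le_powR _ _ _ p0 aM; have A0 := ipow_ge0 (a + x - y) p.
have m_ge1 : 1 <= powR M%:R p := le_trans (ipow_ge1 _ _ p0 a_neq0) a_le.
rewrite mul1r; set c := c_p p in c_gt0 c_le1 *; set m := powR M%:R p in m_ge1 a_le *.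
set X := ipow x p in X0 *; set Y := ipow y p in Y0 *.
have c_ge0 := ltW c_gt0; have m_ge0 := le_trans ler01 m_ge1.
have [xy | x_neq_y] := eqVneq x y.
  have XY : X = Y by rewrite /X xy.
  have cY_le : c * Y <= Y by rewrite ler_piMl.
  have : 0 <= (c + 1) * m * (X + Y) by rewrite !mulr_ge0 ?addr_ge0.
  rewrite xy addrK subrr; lra.
have XY_ge1 : 1 <= X + Y.
  have [x0 | x_neq0] := eqVneq x 0.
    by rewrite /X /Y x0 ipow0 // add0r ipow_ge1 // -x0 eq_sym.
  by rewrite /X /Y -[1]addr0 lerD // ipow_ge1.
have cY_le : c * Y <= c * (m * Y) by rewrite ler_wpM2l // ler_peMl.
have cmX_ge0 : 0 <= c * (m * X) by rewrite !mulr_ge0.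
have m_le : m <= m * (X + Y) by rewrite ler_peMr.
have -> : (c + 1) * m * (X + Y) = c * (m * X) + c * (m * Y) + m * (X + Y) by ring.
lra.
Qed.

End p_powers.

Lemma stab_const_gt0 (R : realType) (p : R) (M dmax d : nat) :
  d_thr p M dmax <= d%:Z -> 0 < stab_const p M dmax d.
Proof.
rewrite /d_thr /stab_const => d_ge; have c_gt0 := cp_gt0 R p.
set c := c_p p in c_gt0 d_ge *; set m := powR M%:R p in d_ge *.
set t := c^-2 + (c^-1 + c^-2) * dmax%:R * m in d_ge.
have t_lt_d : t < d%:R.
  apply: lt_le_trans (floorD1_gt t) _.
  by rewrite -[d%:R]/((d%:Z)%:~R) ler_int addrC.
have tc2 : t * c ^+ 2 = 1 + (c + 1) * dmax%:R * m.
  by rewrite /t; field; rewrite lt0r_neq0.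
move: t_lt_d; rewrite -(ltr_pM2r (exprn_gt0 2 c_gt0)) tc2; lra.
Qed.

Section energy_estimate.
Variables (R : realType) (p : R) (M dmax d : nat) (w w0 : vtx d -> int).
Hypotheses (p_gt0 : 0 < p) (fin_w : finite_diff w w0).

Let N v := ipow (w v - w0 v) p.
Let S := [set v : vtx d | reduced v /\ w v != w0 v].
(* the perturbed vertices together with their parents carry every nonzero term *)
Let X := S `|` (@parent d) @` S.

Let finX : finite_set X.
Proof. by rewrite finite_setU; split; [|apply: finite_image]; apply: fin_w. Qed.

Let X_reduced v : X v -> reduced v.
Proof. by case=> [[]//|[u [ru _] <-]]; apply: reduced_parent. Qed.

Let N_ge0 v : 0 <= N v.
Proof. exact: ipow_ge0. Qed.

Let S_supp v : reduced v -> N v != 0 -> S v.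
Proof.
move=> rv; have [wv|] := eqVneq (w v) (w0 v); last by split.
by rewrite /N wv subrr ipow0 ?eqxx.
Qed.

Let X_parent v a : reduced (rcons v a) -> S (rcons v a) -> X v.
Proof. by move=> _ Sva; right; exists (rcons v a); rewrite ?parent_rcons. Qed.

Let edge_sum (F : vtx d -> vtx d -> R) :=
  \sum_(v <- fset_set X) \sum_(a | reduced (rcons v a)) F v (rcons v a).

Let sum_N : \sum_(v \in [set v | reduced v]) N v = \sum_(v <- fset_set X) N v.
Proof.
rewrite (fsbig_fset_superset finX) => [|v rv Nv]; last by left; apply: S_supp.
apply: eq_big_seq => v; rewrite in_fset_set // => /set_mem/X_reduced rv.
by rewrite mem_set.
Qed.

Let Hdiff_edge_sum :
  Hdiff p w w0 = edge_sum (fun v u => ipow (w u - w v) p - ipow (w0 u - w0 v) p).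
Proof.
rewrite /Hdiff (fsbig_edge_children finX) => [|v a va].
  by apply: eq_bigr => v _; apply: eq_bigr => a _; rewrite parent_rcons.
rewrite parent_rcons; have [wv|] := eqVneq (w v) (w0 v); last first.
  by move=> wv _; left; split => //; apply: reduced_rconsW va.
have [wva|wva _] := eqVneq (w (rcons v a)) (w0 (rcons v a)).
  by rewrite wv wva subrr eqxx.
exact: X_parent va (conj va wva).
Qed.

Let edge_sum_child_le : edge_sum (fun _ u => N u) <= \sum_(v <- fset_set X) N v.
Proof.
rewrite /edge_sum -(fsbig_edge_children finX); last first.
  by move=> v a va Nva; apply: X_parent va (S_supp _ va Nva).
rewrite (fsbig_fset_superset finX) => [|u [ru _] Nu]; last by left; apply: S_supp.
by apply: ler_sum => u _; case: ifP.
Qed.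

Let edge_sum_parent_ge :
  d%:R * \sum_(v <- fset_set X) N v <= edge_sum (fun v _ => N v).
Proof.
rewrite /edge_sum mulr_sumr big_seq [leRHS]big_seq; apply: ler_sum => v.
rewrite in_fset_set // => /set_mem/X_reduced rv.
rewrite sumr_const -[N v *+ _]mulr_natl ler_wpM2r // ler_nat.
exact: card_children_ge.
Qed.

Let broken (v u : vtx d) : R := (w0 u != w0 v)%:R.

Hypothesis broken_deg_le : forall v, reduced v -> (broken_deg w0 v <= dmax)%N.

Let edge_sum_broken_le :
  edge_sum (fun v u => broken v u * (N u + N v))
    <= dmax%:R * \sum_(v <- fset_set X) N v.
Proof.
have split_ends : edge_sum (fun v u => broken v u * (N u + N v))
    = edge_sum (fun v u => broken v u * N u) + edge_sum (fun v u => broken v u * N v).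
  rewrite /edge_sum -big_split; apply: eq_bigr => v _.
  by rewrite -big_split; apply: eq_bigr => a _; rewrite mulrDr.
have child_ends : edge_sum (fun v u => broken v u * N u)
    = \sum_(v <- fset_set X) ((v != [::]) && (w0 v != w0 (parent v)))%:R * N v.
  transitivity (\sum_(u \in [set u | is_edge_child u]) broken (parent u) u * N u).
    rewrite (fsbig_edge_children finX) => [|v a va].
      by apply: eq_bigr => v _; apply: eq_bigr => a _; rewrite parent_rcons.
    by rewrite mulf_eq0 negb_or => /andP[_ /(S_supp _ va)]; apply: X_parent.
  rewrite (fsbig_fset_superset finX) => [|u [ru _]]; last first.
    by rewrite mulf_eq0 negb_or => /andP[_ /(S_supp _ ru)]; left.
  apply: eq_big_seq => v; rewrite in_fset_set // => /set_mem/X_reduced rv.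
  have -> : (v \in [set u | is_edge_child u]) = (v != [::]).
    by apply/idP/idP => [/set_mem[]//|?]; apply/mem_set.
  by case: (v != [::]); rewrite ?mul0r.
have parent_ends : edge_sum (fun v u => broken v u * N v)
    = \sum_(v <- fset_set X) (\sum_(a | reduced (rcons v a)) broken v (rcons v a)) * N v.
  by apply: eq_bigr => v _; rewrite mulr_suml.
rewrite split_ends child_ends parent_ends -big_split mulr_sumr.
rewrite big_seq [leRHS]big_seq; apply: ler_sum => v.
rewrite in_fset_set // => /set_mem/X_reduced rv.
rewrite /= -mulrDl ler_wpM2r // /broken -natr_sum -natrD -broken_degE ler_nat.
exact: broken_deg_le.
Qed.

Hypothesis increment_le :
  forall v u, reduced v -> u \in neighbours v -> `|w0 v - w0 u| <= M%:Z.

Let edge_sum_le_Hdiff :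
  edge_sum (fun v u => c_p p * N v - N u
    - (c_p p + 1) * powR M%:R p * (broken v u * (N u + N v))) <= Hdiff p w w0.
Proof.
rewrite Hdiff_edge_sum /edge_sum big_seq [leRHS]big_seq; apply: ler_sum => v.
rewrite in_fset_set // => /set_mem/X_reduced rv; apply: ler_sum => a va.
set u := rcons v a.
have incr : `|w0 u - w0 v| <= M%:Z.
  by rewrite distrC increment_le // rcons_in_neighbours.
have := @ipow_edge_change R p M _ (w u - w0 u) (w v - w0 v) p_gt0 incr.
have -> : w0 u - w0 v + (w u - w0 u) - (w v - w0 v) = w u - w v by ring.
rewrite subr_eq0 => edge_change.
by rewrite mulrA [_ * broken _ _]mulrC.
Qed.

Lemma Hdiff_lower_bound :
  (d%:R * c_p p - 1 - (c_p p + 1) * dmax%:R * powR M%:R p)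
    * \sum_(v \in [set v | reduced v]) ipow (w v - w0 v) p <= Hdiff p w w0.
Proof.
apply: le_trans edge_sum_le_Hdiff.
set c := c_p p; set k := (c + 1) * powR M%:R p.
have -> : edge_sum (fun v u => c * N v - N u - k * (broken v u * (N u + N v)))
    = c * edge_sum (fun v _ => N v) - edge_sum (fun _ u => N u)
      - k * edge_sum (fun v u => broken v u * (N u + N v)).
  rewrite /edge_sum !mulr_sumr -!sumrB; apply: eq_bigr => v _.
  by rewrite !mulr_sumr -!sumrB.
rewrite [\sum_(v \in _) _]sum_N; set T := \sum_(v <- _) N v.
have c_gt0 : 0 < c := cp_gt0 R p.
have k_ge0 : 0 <= k by rewrite mulr_ge0 ?addr_ge0 ?powR_ge0 ?(ltW c_gt0).
have parents : c * (d%:R * T) <= c * edge_sum (fun v _ => N v).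
  by rewrite ler_wpM2l ?(ltW c_gt0) //; apply: edge_sum_parent_ge.
have broken_edges : k * edge_sum (fun v u => broken v u * (N u + N v))
    <= k * (dmax%:R * T) by rewrite ler_wpM2l //; apply: edge_sum_broken_le.
have children : edge_sum (fun _ u => N u) <= T := edge_sum_child_le.
have -> : (d%:R * c - 1 - (c + 1) * dmax%:R * powR M%:R p) * T
    = c * (d%:R * T) - T - k * (dmax%:R * T) by rewrite /k; ring.
lra.
Qed.

End energy_estimate.

Arguments Hdiff_lower_bound {R p M dmax d w w0}.

Theorem mainTheorem4 (R : realType) (p : R) (M dmax d : nat)
  (w0 : vtx d -> int) :
  0 < p ->
  d_thr p M dmax <= d%:Z ->
  (forall v : vtx d, reduced v -> (broken_deg w0 v <= dmax)%N) ->
  (forall v w : vtx d, reduced v -> w \in neighbours v ->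
     `|w0 v - w0 w| <= M%:Z) ->
  stable p w0 (stab_const p M dmax d).
Proof.
move=> p_gt0 d_ge deg_le incr_le; split; first exact: stab_const_gt0.
move=> w fin_w; apply: le_trans _ (Hdiff_lower_bound p_gt0 fin_w deg_le incr_le).
have c_gt0 := cp_gt0 R p; have c_le1 := cp_le1 R p.
have sum_ge0 : 0 <= \sum_(v \in [set v | reduced v]) ipow (w v - w0 v) p.
  by apply: fsumr_ge0 => v _; apply: ipow_ge0.
by rewrite ler_wpM2r // /stab_const !lerD2r ler_wpM2l // expr2 ler_piMl ?(ltW c_gt0).
Qed.
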